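(* Let $\mathcal{X},\mathcal{Y}$ be finite alphabets, let $W=W_{Y|X}$ be a channel from $\mathcal{X}$ to $\mathcal{Y}$, and let $\rho\in[1,\infty]$. For $P_0,P_1\in\Delta(\mathcal{X})$ let $Q_i(y)=\sum_{x}P_i(x)W(y|x)$. Then the SDPI coefficient $$\eta_\rho(W)=\sup_{P_0,P_1\in\Delta(\mathcal{X})}\frac{D_\rho(Q_0\|Q_1)}{D_\rho(P_0\|P_1)}$$ is achieved by binary input distributions, i.e., the supremum is unchanged when restricted to pairs $(P_0,P_1)$ supported on a common set of at most two elements of $\mathcal{X}$.
   Context: $\Delta(\mathcal{X})$ is the probability simplex on $\mathcal{X}$. Rényi divergence of order $\rho$: $D_\rho(P\|Q)=\frac{1}{\rho-1}\log\sum_x P(x)^\rho Q(x)^{1-\rho}$, with $D_1=D_{\mathrm{KL}}$ (limit $\rho\to1$) and $D_\infty(P\|Q)=\log\max_x \frac{P(x)}{Q(x)}$. *)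

From HB Require Import structures.
From mathcomp Require Import all_boot all_order all_algebra.
From mathcomp Require Import all_classical all_reals all_analysis.
Set Implicit Arguments. Unset Strict Implicit. Unset Printing Implicit Defensive.
Import Order.TTheory GRing.Theory Num.Theory.
Local Open Scope ring_scope.

Section Defs.
Variable R : realType.

Definition is_dist (X : finType) (P : X -> R) : Prop :=
  (forall x, 0 <= P x) /\ \sum_(x : X) P x = 1.

(* W : X -> Y -> R, W x y = W(y|x); every row is a distribution *)
Definition is_channel (X Y : finType) (W : X -> Y -> R) : Prop :=
  forall x, is_dist (W x).

Definition out_dist (X Y : finType) (W : X -> Y -> R) (P : X -> R) : Y -> R :=
  fun y => \sum_(x : X) P x * W x y.

(* Convention: 0 * anything = 0 (terms with P x = 0 are dropped); if P x > 0
   and Q x = 0 for some x the divergence is +oo.  rho = 1 is KL, rho = +oo is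
   the max-divergence.  (rho = -oo is a junk value, never used.) *)
Definition renyi_div (X : finType) (rho : \bar R) (P Q : X -> R) : \bar R :=
  if [exists x, (0 < P x) && (Q x == 0)] then +oo%E else
  match rho with
  | +oo%E => (ln (\big[Num.max/0]_(x | 0 < P x) (P x / Q x)))%:E
  | EFin r =>
      if r == 1 then (\sum_(x | 0 < P x) P x * ln (P x / Q x))%:E
      else ((r - 1)^-1 * ln (\sum_(x | 0 < P x) P x `^ r * Q x `^ (1 - r)))%:E
  | -oo%E => 0%E
  end.

Definition sdpi_ratio (X Y : finType) (rho : \bar R) (W : X -> Y -> R)
  (P0 P1 : X -> R) : \bar R :=
  (renyi_div rho (out_dist W P0) (out_dist W P1) *
   ((fine (renyi_div rho P0 P1))^-1)%:E)%E.

Definition admissible (X : finType) (rho : \bar R) (P0 P1 : X -> R) : Prop :=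
  [/\ is_dist P0, is_dist P1, (0 < renyi_div rho P0 P1)%E
    & (renyi_div rho P0 P1 < +oo)%E].

Definition sdpi_eta (X Y : finType) (rho : \bar R) (W : X -> Y -> R) : \bar R :=
  ereal_sup [set r | exists P0 P1, admissible rho P0 P1 /\ r = sdpi_ratio rho W P0 P1].

Definition binary_supported (X : finType) (P0 P1 : X -> R) : Prop :=
  exists a b : X, forall x, x != a -> x != b -> P0 x = 0 /\ P1 x = 0.

Definition sdpi_eta_binary (X Y : finType) (rho : \bar R) (W : X -> Y -> R) : \bar R :=
  ereal_sup [set r | exists P0 P1, [/\ admissible rho P0 P1,
                binary_supported P0 P1 & r = sdpi_ratio rho W P0 P1]].
End Defs.

From HB Require Import structures.
From mathcomp Require Import all_boot all_order all_algebra.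
From mathcomp Require Import all_classical all_reals all_analysis.
From mathcomp Require Import ring lra.
Import Order.TTheory GRing.Theory Num.Theory.
Set Implicit Arguments. Unset Strict Implicit. Unset Printing Implicit Defensive.
Local Open Scope ring_scope.

(* The divergences D_rho, rho >= 1, are functionals of the pointwise likelihood
   ratio P0/P1: the Kullback-Leibler divergence and the Renyi sums
   \sum_x P1 x * f (P0 x / P1 x) are f-divergences for the convex functions
   f t = t ln t and f t = t^r, and D_oo is the logarithm of the largest ratio.
   When the common support of P0 and P1 has at least three points, a weight
   c : X -> [0, 1] carried by two points and with \sum c P0 = \sum c P1 = b
   splits P_i = b A_i + (1 - b) A'_i, where A_i = c P_i / b and
   A'_i = (1 - c) P_i / (1 - b) both have smaller supports.  An f-divergence is
   linear under such a split of the inputs (its summand is positively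
   homogeneous) and jointly convex on the outputs; together with the concavity
   of t |-> t^e in the Renyi case, and with the behaviour of the largest ratio
   for D_oo, the contraction D(P0 W || P1 W) <= e D(P0 || P1), 0 <= e <= 1,
   passes from the two parts to the pair.  Induction on the support therefore
   reduces every contraction bound to binary pairs.  Run through the identity
   channel with e = 0, the same induction shows that a pair with positive
   divergence has a binary descendant with positive divergence, so the binary
   supremum is taken over a nonempty set. *)

Section AbsCont.
Variable R : realFieldType.
Implicit Types a b k : R.

Definition acpair a b := [/\ 0 <= a, 0 <= b & (0 < a -> 0 < b)].

Lemma acpair0 : acpair 0 0.
Proof. by split; rewrite ?lexx ?ltxx. Qed.

Lemma acpairD a b a' b' : acpair a b -> acpair a' b' -> acpair (a + a') (b + b').
Proof.
case=> a0 b0 ab [a'0 b'0 ab']; split; rewrite ?addr_ge0 //.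
have [/ab bp _|a_le0] := ltrP 0 a; first by rewrite ltr_pwDl.
have -> : a = 0 by apply/eqP; rewrite eq_le a_le0 a0.
by rewrite add0r => /ab' b'p; rewrite ltr_wpDl.
Qed.

Lemma acpairZ k a b : 0 <= k -> acpair a b -> acpair (k * a) (k * b).
Proof.
rewrite le_eqVlt => /predU1P [<-|k0] [a0 b0 ab]; first by rewrite !mul0r; exact: acpair0.
by split; rewrite ?mulr_ge0 ?(ltW k0) // !pmulr_rgt0.
Qed.

Lemma acpair_sum (I : Type) (r : seq I) (P : pred I) (F G : I -> R) :
  (forall i, P i -> acpair (F i) (G i)) ->
  acpair (\sum_(i <- r | P i) F i) (\sum_(i <- r | P i) G i).
Proof. by move=> FG; apply: (big_ind2 _ (@acpair0) (@acpairD)). Qed.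

Lemma acpair_divK a b : acpair a b -> b * (a / b) = a.
Proof.
case=> a0 b0 ab; have [bp|b_le0] := ltrP 0 b; first by rewrite mulrC divfK ?gt_eqF.
have b_eq0 : b = 0 by apply/eqP; rewrite eq_le b_le0 b0.
rewrite b_eq0 mul0r; apply/esym/eqP; rewrite eq_le a0 andbT leNgt.
by apply/negP => /ab; rewrite b_eq0 ltxx.
Qed.

End AbsCont.

Section Perspective.
Variables (R : realFieldType) (f : R -> R).

(* [persp a 0 = 0] for every [f]: points where both masses vanish contribute nothing. *)
Definition persp (a b : R) := b * f (a / b).

Lemma perspZ k a b : 0 <= k -> persp (k * a) (k * b) = k * persp a b.
Proof.
rewrite le_eqVlt => /predU1P [<-|k0]; first by rewrite /persp !mul0r.
by rewrite /persp -mulf_div divff ?gt_eqF // mul1r mulrA.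
Qed.

Definition has_subgradients :=
  forall m, 0 < m -> exists s, forall t, 0 <= t -> f m + s * (t - m) <= f t.

Hypothesis f_subgrad : has_subgradients.

Lemma persp_subadd a b a' b' : acpair a b -> acpair a' b' ->
  persp (a + a') (b + b') <= persp a b + persp a' b'.
Proof.
move=> ab ab'; have [[a0 _ _] [a'0 _ _]] := (ab, ab').
have [sp|s_le0] := ltrP 0 (a + a'); last first.
  have /andP [/eqP -> /eqP ->] : (a == 0) && (a' == 0).
    by rewrite -paddr_eq0 // eq_le s_le0 addr_ge0.
  by rewrite /persp addr0 !mul0r mulrDl.
have [_ _ /(_ sp) Bp] := acpairD ab ab'.
(* Both summands lie above the supporting line of [f] at the pooled ratio [m],
   and these two lower bounds add up to [persp (a + a') (b + b')]. *)
set m := (a + a') / (b + b').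
have [s tangent] := f_subgrad (divr_gt0 sp Bp).
have below c d : acpair c d -> d * f m + s * (c - d * m) <= persp c d.
  move=> /[dup] cd [c0 d0 _].
  rewrite -{1}(acpair_divK cd) -mulrBr mulrCA -mulrDr.
  exact/ler_wpM2l/tangent/divr_ge0.
apply: le_trans (lerD (below _ _ ab) (below _ _ ab')).
have Bm : (b + b') * m = a + a' by rewrite mulrC divfK ?gt_eqF.
have -> : b * f m + s * (a - b * m) + (b' * f m + s * (a' - b' * m))
    = (b + b') * f m + s * (a + a' - (b + b') * m) by ring.
by rewrite Bm subrr mulr0 addr0.
Qed.

Lemma persp_sum_le (I : Type) (r : seq I) (P : pred I) (F G : I -> R) :
  (forall i, P i -> acpair (F i) (G i)) ->
  persp (\sum_(i <- r | P i) F i) (\sum_(i <- r | P i) G i)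
    <= \sum_(i <- r | P i) persp (F i) (G i).
Proof.
move=> FG; pose K a b s := acpair a b /\ persp a b <= s.
suff [] : K (\sum_(i <- r | P i) F i) (\sum_(i <- r | P i) G i)
            (\sum_(i <- r | P i) persp (F i) (G i)) by [].
apply: (big_ind3 K) => [|a b s a' b' s' [ab le] [ab' le']|i /FG ab].
- by split; [exact: acpair0 | rewrite /persp !mul0r].
- split; first exact: acpairD.
  exact: le_trans (persp_subadd ab ab') (lerD le le').
- by split.
Qed.

Definition fdiv (T : finType) (P0 P1 : T -> R) := \sum_x persp (P0 x) (P1 x).

Lemma fdiv_ge (T : finType) (P0 P1 : T -> R) :
  (forall x, acpair (P0 x) (P1 x)) -> \sum_x P0 x = 1 -> \sum_x P1 x = 1 ->
  f 1 <= fdiv P0 P1.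
Proof.
move=> P01 s0 s1.
have := @persp_sum_le T (index_enum T) (fun _ => true) P0 P1 (fun x _ => P01 x).
by rewrite s0 s1 /persp divr1 mul1r.
Qed.

Lemma fdiv_mix_le (T : finType) (A0 A1 B0 B1 : T -> R) s t :
  0 <= s -> 0 <= t ->
  (forall x, acpair (A0 x) (A1 x)) -> (forall x, acpair (B0 x) (B1 x)) ->
  fdiv (fun x => s * A0 x + t * B0 x) (fun x => s * A1 x + t * B1 x)
    <= s * fdiv A0 A1 + t * fdiv B0 B1.
Proof.
move=> s0 t0 A01 B01; rewrite /fdiv !mulr_sumr -big_split /=.
apply: ler_sum => x _; rewrite -!perspZ //.
by apply: persp_subadd; apply: acpairZ.
Qed.

End Perspective.

Section MaxRatio.
Variables (R : realFieldType) (T : finType).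

Definition max_ratio (P0 P1 : T -> R) := \big[Num.max/0]_(x | 0 < P0 x) (P0 x / P1 x).

Lemma max_ratio_ge0 (P0 P1 : T -> R) : 0 <= max_ratio P0 P1.
Proof. exact: bigmax_ge_id. Qed.

Lemma le_max_ratio (P0 P1 : T -> R) x : acpair (P0 x) (P1 x) -> P0 x <= max_ratio P0 P1 * P1 x.
Proof.
case=> a0 b0 ab; have [ap|a_le0] := ltrP 0 (P0 x).
  by rewrite -ler_pdivrMr ?ab //; apply: le_bigmax_cond.
exact: le_trans a_le0 (mulr_ge0 (max_ratio_ge0 _ _) b0).
Qed.

Lemma max_ratio_le (P0 P1 : T -> R) l : 0 <= l -> (forall x, 0 <= P1 x) ->
  (forall x, P0 x <= l * P1 x) -> max_ratio P0 P1 <= l.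
Proof.
move=> l0 P1_ge0 le_l; apply: bigmax_le => // x ap.
have bp : 0 < P1 x.
  rewrite lt_def P1_ge0 andbT; apply: contraTneq ap => b0.
  by rewrite -leNgt (le_trans (le_l x)) // b0 mulr0.
by rewrite ler_pdivrMr.
Qed.

Lemma max_ratio_ge1 (P0 P1 : T -> R) : (forall x, acpair (P0 x) (P1 x)) ->
  \sum_x P0 x = 1 -> \sum_x P1 x = 1 -> 1 <= max_ratio P0 P1.
Proof.
move=> P01 s0 s1; rewrite -{1}s0 -[X in _ <= X]mulr1 -s1 mulr_sumr.
by apply: ler_sum => x _; apply: le_max_ratio.
Qed.

Lemma max_ratio_scale_le (P0 P1 k : T -> R) : (forall x, 0 <= k x) ->
  (forall x, acpair (P0 x) (P1 x)) ->
  max_ratio (fun x => k x * P0 x) (fun x => k x * P1 x) <= max_ratio P0 P1.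
Proof.
move=> k0 P01; apply: max_ratio_le => [||x]; first exact: max_ratio_ge0.
  by move=> x; have [_ P1_ge0 _] := P01 x; rewrite mulr_ge0.
by rewrite mulrCA; apply: ler_wpM2l; last exact: le_max_ratio.
Qed.

Lemma max_ratio_mix_le (A0 A1 B0 B1 : T -> R) s t : 0 <= s -> 0 <= t ->
  (forall x, acpair (A0 x) (A1 x)) -> (forall x, acpair (B0 x) (B1 x)) ->
  max_ratio (fun x => s * A0 x + t * B0 x) (fun x => s * A1 x + t * B1 x)
    <= Num.max (max_ratio A0 A1) (max_ratio B0 B1).
Proof.
move=> s0 t0 A01 B01; apply: max_ratio_le => [||x].
- by rewrite le_max max_ratio_ge0.
- by move=> x; have [[_ A1_ge0 _] [_ B1_ge0 _]] := (A01 x, B01 x); rewrite addr_ge0 ?mulr_ge0.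
have [[_ A1_ge0 _] [_ B1_ge0 _]] := (A01 x, B01 x).
rewrite mulrDr (mulrCA _ s) (mulrCA _ t); apply: lerD; apply: ler_wpM2l => //.
  apply: le_trans (le_max_ratio (A01 x)) _.
  by apply: ler_wpM2r => //; rewrite le_max lexx.
apply: le_trans (le_max_ratio (B01 x)) _.
by apply: ler_wpM2r => //; rewrite le_max lexx orbT.
Qed.

End MaxRatio.

Section RealInequalities.
Variable R : realType.

Lemma ln_le_subr1 (x : R) : 0 < x -> ln x <= x - 1.
Proof. by move=> x0; have := @le_ln1Dx R (x - 1); rewrite subrKC; apply; lra. Qed.

Lemma xlnx_subgradients : has_subgradients (fun t : R => t * ln t).
Proof.
move=> m m0; exists (ln m + 1) => t; rewrite le_eqVlt => /predU1P [<-|t0].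
  have -> : m * ln m + (ln m + 1) * (0 - m) = - m by ring.
  by rewrite mul0r oppr_le0 ltW.
have := ler_wpM2l (ltW t0) (ln_le_subr1 (divr_gt0 m0 t0)).
rewrite ln_div ?posrE // !mulrBr [t * (m / t)]mulrC divfK ?gt_eqF //.
nra.
Qed.

Lemma powR_le_tangent1 (e t : R) : 0 <= e <= 1 -> 0 <= t -> t `^ e <= e * t + (1 - e).
Proof.
case/andP; rewrite le_eqVlt => /predU1P [<- _|e0]; first by rewrite powRr0 mul0r subr0 add0r.
rewrite le_eqVlt => /predU1P [->|e1] t0; first by rewrite powRr1 // mul1r subrr addr0.
have p0 : 0 < e^-1 by rewrite invr_gt0.
have q0 : 0 < (1 - e)^-1 by rewrite invr_gt0 subr_gt0.
have := conjugate_powR (powR_ge0 t e) ler01 p0 q0.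
rewrite !invrK mulr1 powR1 -powRrM mulfV ?gt_eqF // powRr1 // addrC subrK.
by move=> /(_ erefl) /le_trans; apply; rewrite mul1r mulrC.
Qed.

Lemma powR_ge_tangent1 (r t : R) : 1 <= r -> 0 <= t -> 1 + r * (t - 1) <= t `^ r.
Proof.
move=> r1 t0; have r0 : 0 < r by apply: lt_le_trans r1.
have e01 : 0 <= r^-1 <= 1 by rewrite invr_ge0 ltW //= invf_le1.
have := powR_le_tangent1 e01 (powR_ge0 t r).
rewrite -powRrM mulfV ?gt_eqF // powRr1 // => /(ler_wpM2l (ltW r0)).
rewrite mulrDr mulrA mulfV ?gt_eqF // mul1r mulrBr mulr1 mulfV ?gt_eqF //.
lra.
Qed.

Lemma powR_subgradients (r : R) : 1 <= r -> has_subgradients (fun t : R => t `^ r).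
Proof.
move=> r1 m m0; exists (r * m `^ (r - 1)) => t t0.
have tm : t = m * (t / m) by rewrite mulrC divfK ?gt_eqF.
rewrite {2}tm powRM ?divr_ge0 ?(ltW m0) //.
apply: le_trans (ler_wpM2l (powR_ge0 m r)
                           (powR_ge_tangent1 r1 (divr_ge0 t0 (ltW m0)))).
rewrite powRB; last by rewrite (gt_eqF m0) implybT.
rewrite powRr1 ?(ltW m0) // le_eqVlt; apply/predU1P; left.
by field; rewrite gt_eqF.
Qed.

Lemma powR_mix_ge (b e x y : R) : 0 <= b <= 1 -> 0 <= e <= 1 -> 0 < x -> 0 < y ->
  b * x `^ e + (1 - b) * y `^ e <= (b * x + (1 - b) * y) `^ e.
Proof.
move=> /andP [b0]; rewrite -subr_ge0 => b1 e01 x0 y0; set m := b * x + (1 - b) * y.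
have m0 : 0 < m by rewrite /m; nra.
have le_tangent (z : R) : 0 < z -> z `^ e <= m `^ e * (e * (z / m) + (1 - e)).
  move=> z0; rewrite -[z in z `^ e](divfK (lt0r_neq0 m0)) mulrC.
  rewrite powRM ?(ltW m0) ?divr_ge0 ?(ltW z0) ?(ltW m0) //.
  apply: ler_wpM2l; first exact: powR_ge0.
  exact: powR_le_tangent1 e01 (divr_ge0 (ltW z0) (ltW m0)).
have := lerD (ler_wpM2l b0 (le_tangent x x0)) (ler_wpM2l b1 (le_tangent y y0)).
move/le_trans; apply; rewrite le_eqVlt; apply/predU1P; left.
by rewrite /m; field; exact: lt0r_neq0.
Qed.

End RealInequalities.

Section DistPair.
Variables (R : realType) (T : finType).

Definition dist_pair (P0 P1 : T -> R) :=
  [/\ \sum_x P0 x = 1, \sum_x P1 x = 1 & forall x, acpair (P0 x) (P1 x)].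

Lemma dist_pairP (P0 P1 : T -> R) :
  dist_pair P0 P1 <-> [/\ is_dist P0, is_dist P1 & forall x, 0 < P0 x -> 0 < P1 x].
Proof.
split=> [[s0 s1 P01]|[[P0_ge0 s0] [P1_ge0 s1] ac]].
  by split; [split | split | ] => // x; case: (P01 x).
by split=> // x; split; [apply: P0_ge0 | apply: P1_ge0 | apply: ac].
Qed.

End DistPair.

Section Splitting.
Variables (R : realType) (X : finType).
Implicit Types (c : X -> R) (b : R).

Definition part c b (P : X -> R) : X -> R := fun x => c x / b * P x.

Definition copart c b (P : X -> R) := part (fun x => 1 - c x) (1 - b) P.

Definition splits c b (P0 P1 : X -> R) :=
  [/\ forall x, 0 <= c x <= 1, 0 < b < 1,
      \sum_x c x * P0 x = b & \sum_x c x * P1 x = b].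

Lemma part_dist_pair c b (P0 P1 : X -> R) : 0 < b -> (forall x, 0 <= c x) ->
  \sum_x c x * P0 x = b -> \sum_x c x * P1 x = b -> dist_pair P0 P1 ->
  dist_pair (part c b P0) (part c b P1).
Proof.
move=> b0 c0 s0 s1 [_ _ P01]; split=> [||x].
- by rewrite /part; under eq_bigr do rewrite mulrAC; rewrite -mulr_suml s0 divff ?lt0r_neq0.
- by rewrite /part; under eq_bigr do rewrite mulrAC; rewrite -mulr_suml s1 divff ?lt0r_neq0.
- exact: acpairZ (divr_ge0 (c0 x) (ltW b0)) (P01 x).
Qed.

Lemma split_dist_pairs c b (P0 P1 : X -> R) : dist_pair P0 P1 -> splits c b P0 P1 ->
  dist_pair (part c b P0) (part c b P1) /\ dist_pair (copart c b P0) (copart c b P1).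
Proof.
move=> /[dup] P01 [s0 s1 _] [c01 /andP [b0 b1] sc0 sc1].
have co_sum (P : X -> R) : \sum_x P x = 1 -> \sum_x c x * P x = b ->
    \sum_x (1 - c x) * P x = 1 - b.
  by move=> s sc; under eq_bigr do rewrite mulrBl mul1r; rewrite sumrB s sc.
have c0 x : 0 <= c x by case/andP: (c01 x).
have c1 x : 0 <= 1 - c x by case/andP: (c01 x); rewrite subr_ge0.
by split; apply: part_dist_pair; rewrite ?subr_gt0 ?co_sum.
Qed.

Lemma part_copart c b (P : X -> R) x : 0 < b < 1 ->
  b * part c b P x + (1 - b) * copart c b P x = P x.
Proof.
case/andP=> b0 b1; rewrite /copart /part.
by field; rewrite subr_eq0 !gt_eqF.
Qed.


Definition supp (P : X -> R) := [set x | 0 < P x].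

Lemma dist_pair_supp (P0 P1 : X -> R) x : dist_pair P0 P1 ->
  x \notin supp P1 -> P0 x = 0 /\ P1 x = 0.
Proof.
case=> _ _ /(_ x) [a0 b0 ab]; rewrite inE -leNgt => b_le0.
have b_eq0 : P1 x = 0 by apply/eqP; rewrite eq_le b_le0 b0.
split=> //; apply/eqP; rewrite eq_le a0 andbT leNgt.
by apply: contraTN b_le0 => /ab; rewrite -ltNge.
Qed.

Lemma supp_part (c : X -> R) b (P : X -> R) x :
  x \in supp (part c b P) -> c x != 0 /\ P x != 0.
Proof.
by rewrite inE /part => pos; split; apply: contraTneq pos => ->; rewrite ?mul0r ?mulr0 ltxx.
Qed.

Lemma exists_nonneg_term (A : {set X}) (F : X -> R) a :
  a \in A -> 0 <= \sum_(x in A) F x -> exists2 x, x \in A & 0 <= F x.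
Proof.
move=> Aa sum_ge0; apply/exists_inP; apply: contraTT sum_ge0.
rewrite negb_exists_in => /forall_inP F_lt0; rewrite -ltNge (big_setD1 a Aa) /=.
have := ltr_leD (_ : F a < 0) (_ : \sum_(x in A :\ a) F x <= 0); rewrite addr0; apply.
  by rewrite ltNge F_lt0.
by apply: sumr_le0 => x /setD1P [_ /F_lt0]; rewrite -ltNge => /ltW.
Qed.

Lemma exists_outside_pair (S : {set X}) u v : (2 < #|S|)%N ->
  exists2 w, w \in S & w \notin [set u; v].
Proof.
move=> S3; apply/fintype.subsetPn; apply: contraTN S3 => /subset_leq_card; rewrite -leqNgt.
by move/leq_trans; apply; rewrite cards2; case: (_ != _).
Qed.

Lemma binary_supported_of_supp (P0 P1 : X -> R) :
  dist_pair P0 P1 -> (#|supp P1| <= 2)%N -> binary_supported P0 P1.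
Proof.
move=> /[dup] P01 [_ s1 ac] le2.
have [a Sa] : exists a, a \in supp P1.
  apply/set0Pn; apply: contra_eqN s1 => /eqP S0; rewrite big1 1?eq_sym ?oner_eq0 // => x _.
  have xS : x \notin supp P1 by rewrite S0 inE.
  by have [] := dist_pair_supp P01 xS.
suff [a' Saa'] : exists a', supp P1 \subset [set a; a'].
  exists a, a' => x xa xa'; apply: dist_pair_supp => //.
  apply: contraNN xa => /(fintype.subsetP Saa').
  by rewrite !inE (negbTE xa') orbF.
have [S1|[a' Sa']] := set_0Vmem (supp P1 :\ a).
  exists a; apply/fintype.subsetP => x Sx; rewrite !inE orbb; apply: contraT => xa.
  have : x \in supp P1 :\ a by rewrite in_setD1 xa Sx.
  by rewrite S1 inE.
exists a'; apply/fintype.subsetP => x Sx; rewrite !inE; apply: contraT; rewrite negb_or.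
case/andP=> xa xa'; move: Sa'; rewrite in_setD1 => /andP [a'a Sa'].
have : (2 < #|supp P1|)%N.
  apply/card_gt2P; exists a, a', x; split; first by rewrite Sa Sa' Sx.
  by rewrite eq_sym a'a eq_sym xa' xa.
by rewrite ltnNge le2.
Qed.


(* Also for [d = 0], where [d' / d = 0]. *)
Lemma ratio_balance (d d' : R) : 0 <= d' <= d -> 0 <= d' / d <= 1 /\ d' / d * d = d'.
Proof.
case/andP=> d'0 d'd; have [dp|d_le0] := ltrP 0 d.
  split; last by rewrite divfK ?gt_eqF.
  by rewrite divr_ge0 ?(ltW dp) //= ler_pdivrMr // mul1r.
have [d0 d'0'] : d = 0 /\ d' = 0 by split; apply/eqP; rewrite eq_le; apply/andP; split; lra.
by rewrite d0 d'0' !mul0r lexx ler01.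
Qed.

Lemma split_at_pair (P0 P1 : X -> R) u v w a :
  dist_pair P0 P1 -> (2 < #|supp P1|)%N -> u != v -> v \in supp P1 ->
  w \in supp P1 -> w \notin [set u; v] ->
  0 <= a <= 1 -> a * (P0 u - P1 u) + (P0 v - P1 v) = 0 ->
  exists c b, [/\ splits c b P0 P1, (#|supp (part c b P1)| < #|supp P1|)%N
                & (#|supp (copart c b P1)| < #|supp P1|)%N].
Proof.
move=> [_ s1 ac] S3 uv Sv Sw wuv /andP [a0 a1] bal.
(* [c] keeps all of [v] and the fraction [a] of [u]; the balance equation makes
   the kept masses of [P0] and [P1] equal, and [w] is left entirely outside. *)
pose c x : R := if x == v then 1 else if x == u then a else 0.
have c01 x : 0 <= c x <= 1.
  by rewrite /c; case: (x == v); last case: (x == u); rewrite ?a0 ?a1 ?lexx ?ler01.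
have cw : c w = 0 by move: wuv; rewrite /c !inE negb_or => /andP [/negbTE -> /negbTE ->].
have sum_c (P : X -> R) : \sum_x c x * P x = a * P u + P v.
  rewrite (bigD1 v) // (bigD1 u) 1?uv //= big1 => [|x /andP [xv xu]].
    by rewrite /c eqxx (negbTE uv) eqxx mul1r addr0 addrC.
  by rewrite /c (negbTE xv) (negbTE xu) mul0r.
have [P1u0 P1v0 P1w0] : [/\ 0 <= P1 u, 0 < P1 v & 0 < P1 w].
  by split; [case: (ac u) | move: Sv; rewrite inE | move: Sw; rewrite inE].
set b := a * P1 u + P1 v.
have b0 : 0 < b by rewrite ltr_wpDl ?mulr_ge0.
have b1 : b < 1.
  have : (1 - c w) * P1 w <= \sum_x (1 - c x) * P1 x.
    rewrite (bigD1 w) //= lerDl; apply: sumr_ge0 => x _; apply: mulr_ge0.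
      by have /andP [_] := c01 x; rewrite subr_ge0.
    by case: (ac x).
  under [X in _ <= X]eq_bigr do rewrite mulrBl mul1r.
  rewrite sumrB s1 sum_c -/b cw subr0 mul1r; lra.
exists c, b; split.
- split=> //; first by rewrite b0 b1.
  by rewrite sum_c /b; move: bal; rewrite mulrBr; lra.
- apply: leq_ltn_trans S3; apply: leq_trans (_ : #|[set u; v]| <= 2)%N; last first.
    by rewrite cards2; case: (_ != _).
  apply/subset_leq_card/fintype.subsetP => x /supp_part [cx _]; rewrite !inE.
  by move: cx; rewrite /c; case: (x == v); case: (x == u); rewrite ?orbT ?eqxx.
- apply: leq_ltn_trans (proper_card (properD1 Sv)); apply/subset_leq_card/fintype.subsetP.
  move=> x /supp_part [cx P1x]; rewrite in_setD1 inE lt_def P1x; case: (ac x) => _ -> _.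
  by rewrite !andbT; apply: contra_neq cx => ->; rewrite /c eqxx subrr.
Qed.

Lemma exists_split (P0 P1 : X -> R) : dist_pair P0 P1 -> (2 < #|supp P1|)%N ->
  exists c b, [/\ splits c b P0 P1, (#|supp (part c b P1)| < #|supp P1|)%N
                & (#|supp (copart c b P1)| < #|supp P1|)%N].
Proof.
move=> P01 S3; have [s0 s1 _] := P01.
have diff_supp : \sum_(x in supp P1) (P1 x - P0 x) = 0.
  rewrite big_rmcond => [|x /(dist_pair_supp P01) [-> ->]]; last by rewrite subrr.
  by rewrite sumrB s0 s1 subrr.
have [w0 Sw0] : exists w0, w0 \in supp P1 by apply/card_gt0P; apply: ltn_trans S3.
have [u Su du] : exists2 u, u \in supp P1 & 0 <= P1 u - P0 u.
  by apply: (exists_nonneg_term Sw0); rewrite diff_supp.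
have [v] : exists2 v, v \in supp P1 :\ u & 0 <= P0 v - P1 v.
  have [w Sw] := exists_outside_pair u u S3; rewrite !inE orbb => wu.
  apply: (exists_nonneg_term (a := w)); first by rewrite in_setD1 wu Sw.
  rewrite (eq_bigr (fun x => - (P1 x - P0 x))) => [|x _]; last by rewrite opprB.
  by rewrite sumrN; move: diff_supp; rewrite (big_setD1 u Su) /=; lra.
rewrite in_setD1 => /andP [vu Sv] dv.
have [w Sw wuv] := exists_outside_pair u v S3.
have [le|lt] := leP (P0 v - P1 v) (P1 u - P0 u).
  have := @ratio_balance (P1 u - P0 u) (P0 v - P1 v); rewrite dv le => /(_ isT) [a01 bal].
  apply: (split_at_pair P01 S3 _ Sv Sw wuv a01); first by rewrite eq_sym.
  by rewrite -[P0 u - P1 u]opprB mulrN bal addNr.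
have := @ratio_balance (P0 v - P1 v) (P1 u - P0 u); rewrite du ltW // => /(_ isT) [a01 bal].
apply: (split_at_pair P01 S3 vu Su Sw _ a01); first by move: wuv; rewrite !inE orbC.
by rewrite bal; lra.
Qed.

Lemma dist_pair_ind (Phi : (X -> R) -> (X -> R) -> Prop) :
  (forall P0 P1, dist_pair P0 P1 -> binary_supported P0 P1 -> Phi P0 P1) ->
  (forall P0 P1 c b, dist_pair P0 P1 -> splits c b P0 P1 ->
     Phi (part c b P0) (part c b P1) -> Phi (copart c b P0) (copart c b P1) ->
     Phi P0 P1) ->
  forall P0 P1, dist_pair P0 P1 -> Phi P0 P1.
Proof.
move=> base step P0 P1; move: {2}#|_|.+1 (ltnSn #|supp P1|) => n.
elim: n P0 P1 => // n IH P0 P1 lt_n P01.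
have [le2|gt2] := leqP #|supp P1| 2; first exact/base/binary_supported_of_supp.
have [c [b [cb ltA ltA']]] := exists_split P01 gt2.
have [A01 A'01] := split_dist_pairs P01 cb.
have ltA_n : (#|supp (part c b P1)| < n)%N := leq_trans ltA lt_n.
have ltA'_n : (#|supp (copart c b P1)| < n)%N := leq_trans ltA' lt_n.
by apply: (step _ _ c b) => //; apply: IH.
Qed.


Lemma fdiv_split (f : R -> R) c b (P0 P1 : X -> R) : splits c b P0 P1 ->
  fdiv f P0 P1 = b * fdiv f (part c b P0) (part c b P1)
                 + (1 - b) * fdiv f (copart c b P0) (copart c b P1).
Proof.
case=> c01 /andP [b0 b1] _ _; rewrite /fdiv !mulr_sumr -big_split /=.
apply: eq_bigr => x _; have /andP [c0 c1] := c01 x.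
rewrite /copart /part !perspZ ?divr_ge0 ?subr_ge0 ?(ltW b0) ?(ltW b1) //.
by field; rewrite subr_eq0 !gt_eqF.
Qed.

Lemma max_ratio_part_le c b (P0 P1 : X -> R) : (forall x, 0 <= c x) -> 0 <= b ->
  (forall x, acpair (P0 x) (P1 x)) ->
  max_ratio (part c b P0) (part c b P1) <= max_ratio P0 P1.
Proof. by move=> c0 b0; apply: max_ratio_scale_le => x; rewrite divr_ge0. Qed.

End Splitting.

Section Channels.
Variables (R : realType) (X Y : finType) (W : X -> Y -> R).
Hypothesis W_channel : is_channel W.

Let W_ge0 x y : 0 <= W x y. Proof. by case: (W_channel x). Qed.

Lemma out_dist_pair (P0 P1 : X -> R) :
  dist_pair P0 P1 -> dist_pair (out_dist W P0) (out_dist W P1).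
Proof.
have out_sum (P : X -> R) : \sum_x P x = 1 -> \sum_y out_dist W P y = 1.
  move=> <-; rewrite /out_dist exchange_big /=; apply: eq_bigr => x _.
  by rewrite -mulr_sumr; case: (W_channel x) => _ ->; rewrite mulr1.
case=> s0 s1 P01; split; rewrite ?out_sum // => y.
by apply: acpair_sum => x _; rewrite ![_ * W x y]mulrC; apply: acpairZ.
Qed.

Lemma out_dist_mix (A B : X -> R) s t :
  out_dist W (fun x => s * A x + t * B x)
  = (fun y => s * out_dist W A y + t * out_dist W B y).
Proof.
apply/funext => y; rewrite /out_dist !mulr_sumr -big_split /=.
by apply: eq_bigr => x _; rewrite mulrDl !mulrA.
Qed.

Lemma out_dist_split c b (P : X -> R) : 0 < b < 1 ->
  out_dist W P = (fun y => b * out_dist W (part c b P) y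
                           + (1 - b) * out_dist W (copart c b P) y).
Proof.
move=> b01; rewrite -out_dist_mix; congr out_dist.
by apply/funext => x; rewrite part_copart.
Qed.

Section Divergences.
Variable f : R -> R.
Hypothesis f_subgrad : has_subgradients f.

Lemma fdiv_out_le (P0 P1 : X -> R) : (forall x, acpair (P0 x) (P1 x)) ->
  fdiv f (out_dist W P0) (out_dist W P1) <= fdiv f P0 P1.
Proof.
move=> P01; rewrite /fdiv /out_dist.
apply: le_trans (_ : \sum_y \sum_x persp f (P0 x * W x y) (P1 x * W x y) <= _).
  apply: ler_sum => y _; apply: persp_sum_le => // x _.
  by rewrite ![_ * W x y]mulrC; apply: acpairZ.
rewrite exchange_big /= le_eqVlt; apply/predU1P; left; apply: eq_bigr => x _.
under eq_bigr => y _ do rewrite ![_ * W x y]mulrC perspZ //.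
by rewrite -mulr_suml; case: (W_channel x) => _ ->; rewrite mul1r.
Qed.

Lemma fdiv_out_split_le c b (P0 P1 : X -> R) :
  dist_pair P0 P1 -> splits c b P0 P1 ->
  fdiv f (out_dist W P0) (out_dist W P1)
    <= b * fdiv f (out_dist W (part c b P0)) (out_dist W (part c b P1))
       + (1 - b) * fdiv f (out_dist W (copart c b P0)) (out_dist W (copart c b P1)).
Proof.
move=> P01 /[dup] cb [_ b01 _ _]; have [b0 b1] := andP b01.
have [/out_dist_pair [_ _ A01] /out_dist_pair [_ _ A'01]] := split_dist_pairs P01 cb.
rewrite (out_dist_split c P0 b01) (out_dist_split c P1 b01).
by apply: fdiv_mix_le; rewrite ?subr_ge0 ?ltW.
Qed.

End Divergences.

Lemma max_ratio_out_le (P0 P1 : X -> R) : (forall x, acpair (P0 x) (P1 x)) ->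
  max_ratio (out_dist W P0) (out_dist W P1) <= max_ratio P0 P1.
Proof.
move=> P01; apply: max_ratio_le => [||y]; first exact: max_ratio_ge0.
  by move=> y; apply: sumr_ge0 => x _; have [_ P1_ge0 _] := P01 x; rewrite mulr_ge0.
rewrite /out_dist mulr_sumr; apply: ler_sum => x _; rewrite mulrA.
exact: ler_wpM2r (le_max_ratio (P01 x)).
Qed.

Lemma max_ratio_out_split_le c b (P0 P1 : X -> R) :
  dist_pair P0 P1 -> splits c b P0 P1 ->
  max_ratio (out_dist W P0) (out_dist W P1)
    <= Num.max (max_ratio (out_dist W (part c b P0)) (out_dist W (part c b P1)))
               (max_ratio (out_dist W (copart c b P0)) (out_dist W (copart c b P1))).
Proof.
move=> P01 /[dup] cb [_ b01 _ _]; have [b0 b1] := andP b01.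
have [/out_dist_pair [_ _ A01] /out_dist_pair [_ _ A'01]] := split_dist_pairs P01 cb.
rewrite (out_dist_split c P0 b01) (out_dist_split c P1 b01).
by apply: max_ratio_mix_le; rewrite ?subr_ge0 ?ltW.
Qed.
End Channels.

Section RenyiFinite.
Variable R : realType.

(* The value of [renyi_div] on pairs with [P0 << P1] (see [renyi_divE]); the
   branch [-oo] is junk. *)
Definition renyi_fin (rho : \bar R) (T : finType) (P0 P1 : T -> R) : R :=
  match rho with
  | +oo%E => ln (max_ratio P0 P1)
  | r%:E => if r == 1 then fdiv (fun t => t * ln t) P0 P1
            else (r - 1)^-1 * ln (fdiv (fun t => t `^ r) P0 P1)
  | -oo%E => 0
  end.

Lemma persp_powRE (r a b : R) : 0 <= a -> 0 < b ->
  persp (fun t => t `^ r) a b = a `^ r * b `^ (1 - r).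
Proof.
move=> a0 b0; rewrite /persp powRM ?invr_ge0 ?(ltW b0) //.
rewrite -powR_inv1 ?(ltW b0) // -powRrM mulN1r powRN.
rewrite powRB; last by rewrite (gt_eqF b0) implybT.
by rewrite powRr1 ?(ltW b0) // mulrCA.
Qed.

Lemma renyi_divE (rho : \bar R) (T : finType) (P0 P1 : T -> R) : (1%:E <= rho)%E ->
  (forall x, acpair (P0 x) (P1 x)) -> renyi_div rho P0 P1 = (renyi_fin rho P0 P1)%:E.
Proof.
move=> rho1 P01; rewrite /renyi_div ifF; last first.
  apply/negbTE/existsPn => x; apply/negP => /andP [P0x /eqP P1x0].
  by have [_ _ /(_ P0x)] := P01 x; rewrite P1x0 ltxx.
have P0_eq0 x : ~~ (0 < P0 x) -> P0 x = 0.
  by have [P0x _ _] := P01 x; rewrite -leNgt => P0x'; apply/eqP; rewrite eq_le P0x P0x'.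
case: rho rho1 => [r r1| |] //=.
rewrite lee_fin in r1; case: ifP => _; congr (_%:E); [|congr (_ * ln _)];
  rewrite /fdiv big_mkcond; apply: eq_bigr => x _; case: ifPn => [P0x|/P0_eq0 ->].
- by rewrite /persp mulrA acpair_divK.
- by rewrite /persp !mul0r mulr0.
- by have [_ _ /(_ P0x) P1x] := P01 x; rewrite persp_powRE ?ltW.
- by rewrite /persp mul0r powR0 ?mulr0 // gt_eqF // (lt_le_trans ltr01).
Qed.

Lemma renyi_sum_ge1 r (T : finType) (P0 P1 : T -> R) : 1 <= r -> dist_pair P0 P1 ->
  1 <= fdiv (fun t => t `^ r) P0 P1.
Proof.
by move=> r1 [s0 s1 P01]; have := fdiv_ge (powR_subgradients r1) P01 s0 s1; rewrite powR1.
Qed.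

Lemma ln_max_ratio_le (T T' : finType) (Q0 Q1 : T -> R) (Q0' Q1' : T' -> R) :
  dist_pair Q0 Q1 ->
  max_ratio Q0 Q1 <= max_ratio Q0' Q1' -> ln (max_ratio Q0 Q1) <= ln (max_ratio Q0' Q1').
Proof.
case=> s0 s1 Q01 le; have M1 := max_ratio_ge1 Q01 s0 s1.
by rewrite ler_ln ?posrE ?(lt_le_trans ltr01) // (le_trans M1).
Qed.

Lemma renyi_level (r e S S' : R) : 1 < r -> 0 < S -> 0 < S' ->
  ((r - 1)^-1 * ln S' <= e * ((r - 1)^-1 * ln S)) = (S' <= S `^ e).
Proof.
move=> r1 S0 S'0; rewrite mulrCA ler_pM2l ?invr_gt0 ?subr_gt0 // -ln_powR.
by rewrite ler_ln ?posrE ?powR_gt0.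
Qed.

End RenyiFinite.

Section SplitContraction.
Variables (R : realType) (X Y : finType) (W : X -> Y -> R).
Hypothesis W_channel : is_channel W.
Variables (c P0 P1 : X -> R) (b : R).
Hypotheses (P01 : dist_pair P0 P1) (cb : splits c b P0 P1).

Local Notation out P := (out_dist W P).
Local Notation A0 := (part c b P0).
Local Notation A1 := (part c b P1).
Local Notation A'0 := (copart c b P0).
Local Notation A'1 := (copart c b P1).

Let b01 : 0 < b < 1. Proof. by case: cb. Qed.
Let b_le1 : 0 <= b <= 1. Proof. by case/andP: b01 => /ltW -> /ltW. Qed.
Let b0 : 0 <= b. Proof. by case/andP: b_le1. Qed.
Let b1 : 0 <= 1 - b. Proof. by case/andP: b_le1; rewrite subr_ge0. Qed.

Lemma fdiv_split_contraction (f : R -> R) e :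
  has_subgradients f ->
  0 <= e ->
  fdiv f (out A0) (out A1) <= e * fdiv f A0 A1 ->
  fdiv f (out A'0) (out A'1) <= e * fdiv f A'0 A'1 ->
  fdiv f (out P0) (out P1) <= e * fdiv f P0 P1.
Proof.
move=> f_subgrad e0 le_A le_A'.
apply: le_trans (fdiv_out_split_le W_channel f_subgrad P01 cb) _.
rewrite (fdiv_split f cb) mulrDr (mulrCA e b) (mulrCA e (1 - b)).
exact: lerD (ler_wpM2l b0 le_A) (ler_wpM2l b1 le_A').
Qed.

Lemma renyi_sum_split_contraction r e : 1 <= r -> 0 <= e <= 1 ->
  fdiv (fun t => t `^ r) (out A0) (out A1) <= fdiv (fun t => t `^ r) A0 A1 `^ e ->
  fdiv (fun t => t `^ r) (out A'0) (out A'1) <= fdiv (fun t => t `^ r) A'0 A'1 `^ e ->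
  fdiv (fun t => t `^ r) (out P0) (out P1) <= fdiv (fun t => t `^ r) P0 P1 `^ e.
Proof.
move=> r1 e01 le_A le_A'; have [Ad A'd] := split_dist_pairs P01 cb.
apply: le_trans (fdiv_out_split_le W_channel (powR_subgradients r1) P01 cb) _.
apply: le_trans (lerD (ler_wpM2l b0 le_A) (ler_wpM2l b1 le_A')) _.
rewrite (fdiv_split _ cb); apply: powR_mix_ge => //.
  exact: lt_le_trans ltr01 (renyi_sum_ge1 r1 Ad).
exact: lt_le_trans ltr01 (renyi_sum_ge1 r1 A'd).
Qed.

Lemma max_ratio_split_contraction e : 0 <= e ->
  ln (max_ratio (out A0) (out A1)) <= e * ln (max_ratio A0 A1) ->
  ln (max_ratio (out A'0) (out A'1)) <= e * ln (max_ratio A'0 A'1) ->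
  ln (max_ratio (out P0) (out P1)) <= e * ln (max_ratio P0 P1).
Proof.
move=> e0 le_A le_A'; have [Ad A'd] := split_dist_pairs P01 cb.
have [[_ _ P01'] [c01 _ _ _]] := (P01, cb).
have ln_part_le d a : (forall x, 0 <= d x) -> 0 <= a ->
    dist_pair (part d a P0) (part d a P1) ->
    e * ln (max_ratio (part d a P0) (part d a P1)) <= e * ln (max_ratio P0 P1).
  by move=> d0 a0 Qd; apply/ler_wpM2l/ln_max_ratio_le/max_ratio_part_le.
have := max_ratio_out_split_le W_channel P01 cb; rewrite le_max => /orP [] le.
- apply: le_trans (ln_max_ratio_le (out_dist_pair W_channel P01) le) _.
  apply: le_trans le_A (ln_part_le _ _ _ b0 Ad) => x.
  by case/andP: (c01 x).
- apply: le_trans (ln_max_ratio_le (out_dist_pair W_channel P01) le) _.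
  apply: le_trans le_A' (ln_part_le _ _ _ b1 A'd) => x.
  by case/andP: (c01 x) => _; rewrite subr_ge0.
Qed.

End SplitContraction.

Section IdentityChannel.
Variables (R : realType) (X : finType).

Definition id_channel : X -> X -> R := fun x y => (x == y)%:R.

Lemma id_channel_is_channel : is_channel id_channel.
Proof.
move=> x; split=> [y|]; first by rewrite ler0n.
by rewrite /id_channel (bigD1 x) //= eqxx big1 ?addr0 // => y; rewrite eq_sym => /negbTE ->.
Qed.

Lemma out_dist_id (P : X -> R) : out_dist id_channel P = P.
Proof.
apply/funext => y; rewrite /out_dist /id_channel (bigD1 y) //= eqxx mulr1 big1 ?addr0 //.
by move=> x /negbTE ->; rewrite mulr0.
Qed.

End IdentityChannel.

Section RenyiContraction.
Variables (R : realType) (X Y : finType) (W : X -> Y -> R).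
Hypothesis W_channel : is_channel W.
Variable rho : \bar R.
Hypothesis rho_ge1 : (1%:E <= rho)%E.

Lemma renyi_fin_ge0 (T : finType) (P0 P1 : T -> R) :
  dist_pair P0 P1 -> 0 <= renyi_fin rho P0 P1.
Proof.
move=> /[dup] P01 [s0 s1 ac]; case: rho rho_ge1 => [r| |] //=; rewrite ?lee_fin => r1.
  case: ifPn => [_|r_neq1].
    by have := fdiv_ge (@xlnx_subgradients R) ac s0 s1; rewrite mul1r ln1.
  by rewrite mulr_ge0 ?invr_ge0 ?subr_ge0 // ln_ge0 // renyi_sum_ge1.
by rewrite ln_ge0 // max_ratio_ge1.
Qed.

Lemma renyi_fin_out_le (P0 P1 : X -> R) : dist_pair P0 P1 ->
  renyi_fin rho (out_dist W P0) (out_dist W P1) <= renyi_fin rho P0 P1.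
Proof.
move=> /[dup] P01 [s0 s1 ac]; have [sO0 sO1 acO] := out_dist_pair W_channel P01.
case: rho rho_ge1 => [r| |] //=; rewrite ?lee_fin => r1.
  case: ifPn => [_|r_neq1]; first exact: (fdiv_out_le W_channel (@xlnx_subgradients R) ac).
  rewrite ler_pM2l ?invr_gt0 ?subr_gt0 ?lt_neqAle 1?eq_sym ?r_neq1 //.
  rewrite ler_ln ?posrE ?(lt_le_trans ltr01) ?renyi_sum_ge1 ?out_dist_pair //.
  exact: (fdiv_out_le W_channel (powR_subgradients r1) ac).
exact: ln_max_ratio_le (out_dist_pair W_channel P01) (max_ratio_out_le W_channel ac).
Qed.

Definition sdpi_at (e : R) (P0 P1 : X -> R) :=
  renyi_fin rho (out_dist W P0) (out_dist W P1) <= e * renyi_fin rho P0 P1.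

Lemma sdpi_at_split c b (P0 P1 : X -> R) e :
  dist_pair P0 P1 -> splits c b P0 P1 -> 0 <= e <= 1 ->
  sdpi_at e (part c b P0) (part c b P1) -> sdpi_at e (copart c b P0) (copart c b P1) ->
  sdpi_at e P0 P1.
Proof.
move=> P01 cb /[dup] e01 /andP [e0 _]; rewrite /sdpi_at.
case: rho rho_ge1 => [r| |] //=; rewrite ?lee_fin => r1; last first.
  exact: max_ratio_split_contraction.
case: ifPn => [_|r_neq1]; first exact: fdiv_split_contraction (@xlnx_subgradients R) e0.
have r_gt1 : 1 < r by rewrite lt_neqAle eq_sym r_neq1.
have [Ad A'd] := split_dist_pairs P01 cb.
have S_pos (T : finType) (Q0 Q1 : T -> R) :
    dist_pair Q0 Q1 -> 0 < fdiv (fun t => t `^ r) Q0 Q1.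
  by move/(renyi_sum_ge1 r1); apply: lt_le_trans.
have OP := out_dist_pair W_channel P01.
have OA := out_dist_pair W_channel Ad.
have OA' := out_dist_pair W_channel A'd.
move=> le_A le_A'.
rewrite (renyi_level _ r_gt1 (S_pos _ _ _ Ad) (S_pos _ _ _ OA)) in le_A.
rewrite (renyi_level _ r_gt1 (S_pos _ _ _ A'd) (S_pos _ _ _ OA')) in le_A'.
rewrite (renyi_level _ r_gt1 (S_pos _ _ _ P01) (S_pos _ _ _ OP)).
exact: (renyi_sum_split_contraction W_channel P01 cb r1 e01 le_A le_A').
Qed.

Lemma sdpi_at_of_binary e : 0 <= e <= 1 ->
  (forall B0 B1, dist_pair B0 B1 -> binary_supported B0 B1 -> sdpi_at e B0 B1) ->
  forall P0 P1, dist_pair P0 P1 -> sdpi_at e P0 P1.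
Proof.
by move=> e01 binary; apply: dist_pair_ind => // P0 P1 c b P01 cb; apply: sdpi_at_split.
Qed.

End RenyiContraction.

Section Main.
Variables (R : realType) (X Y : finType) (W : X -> Y -> R).
Hypothesis W_channel : is_channel W.
Variable rho : \bar R.
Hypothesis rho_ge1 : (1%:E <= rho)%E.

Lemma admissibleP (P0 P1 : X -> R) :
  admissible rho P0 P1 <-> dist_pair P0 P1 /\ 0 < renyi_fin rho P0 P1.
Proof.
split=> [[d0 d1 D_gt0 D_fin]|[P01 D_gt0]].
  have P01 : dist_pair P0 P1.
    apply/dist_pairP; split=> // x P0x; rewrite lt_def; have [P1_ge0 _] := d1.
    rewrite P1_ge0 andbT; apply: contraTneq D_fin => P1x0.
    by rewrite /renyi_div ifT ?ltxx //; apply/existsP; exists x; rewrite P0x P1x0 eqxx.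
  by move: D_gt0; rewrite renyi_divE //; case: P01.
have [d0 d1 _] := (dist_pairP _ _).1 P01.
by split; rewrite // renyi_divE ?lte_fin ?ltry //; case: P01.
Qed.

Lemma sdpi_ratioE (P0 P1 : X -> R) : dist_pair P0 P1 ->
  sdpi_ratio rho W P0 P1
  = (renyi_fin rho (out_dist W P0) (out_dist W P1) / renyi_fin rho P0 P1)%:E.
Proof.
move=> /[dup] P01 [_ _ ac]; have [_ _ acO] := out_dist_pair W_channel P01.
by rewrite /sdpi_ratio !renyi_divE.
Qed.

Lemma exists_binary_admissible (P0 P1 : X -> R) : admissible rho P0 P1 ->
  exists B0 B1 : X -> R, admissible rho B0 B1 /\ binary_supported B0 B1.
Proof.
case/admissibleP=> P01 D_gt0; apply/not_existsP => no_binary.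
(* Through the identity channel, the bound with constant 0 says that the
   divergence is nonpositive. *)
suff : sdpi_at (@id_channel R X) rho 0 P0 P1.
  by rewrite /sdpi_at !out_dist_id mul0r leNgt D_gt0.
apply: (sdpi_at_of_binary (@id_channel_is_channel R X) rho_ge1 _ _ P01).
  by rewrite lexx ler01.
move=> B0 B1 B01 binB; rewrite /sdpi_at !out_dist_id mul0r leNgt; apply/negP => DB_gt0.
by apply: (no_binary B0); exists B1; split=> //; apply/admissibleP.
Qed.

Lemma sdpi_ratio_le_binary (P0 P1 : X -> R) : admissible rho P0 P1 ->
  (sdpi_ratio rho W P0 P1 <= sdpi_eta_binary rho W)%E.
Proof.
move=> /[dup] adm /admissibleP [P01 D_gt0].
have ub (B0 B1 : X -> R) : admissible rho B0 B1 -> binary_supported B0 B1 ->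
    (sdpi_ratio rho W B0 B1 <= sdpi_eta_binary rho W)%E.
  by move=> admB binB; apply: ereal_sup_ubound; exists B0, B1.
have [B0 [B1 [/[dup] admB /admissibleP [B01 DB_gt0] binB]]] := exists_binary_admissible adm.
move: ub; case: (sdpi_eta_binary rho W) => [e| |] ub; last 2 first.
- by rewrite leey.
- by have := ub _ _ admB binB; rewrite sdpi_ratioE // leeNy_eq.
have ub_e (A0 A1 : X -> R) : dist_pair A0 A1 -> binary_supported A0 A1 ->
    0 < renyi_fin rho A0 A1 -> sdpi_at W rho e A0 A1.
  move=> A01 binA DA_gt0; have := ub _ _ ((admissibleP _ _).2 (conj A01 DA_gt0)) binA.
  by rewrite sdpi_ratioE // lee_fin ler_pdivrMr.
have e0 : 0 <= e.
  rewrite -(pmulr_lge0 _ DB_gt0); apply: le_trans (ub_e _ _ B01 binB DB_gt0).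
  exact/renyi_fin_ge0/out_dist_pair.
rewrite sdpi_ratioE // lee_fin ler_pdivrMr //.
have [e1|e_lt1] := leP 1 e.
  apply: le_trans (renyi_fin_out_le W_channel rho_ge1 P01) _.
  exact: ler_peMl (renyi_fin_ge0 rho_ge1 P01) e1.
apply: (sdpi_at_of_binary W_channel rho_ge1 _ _ P01); first by rewrite e0 ltW.
move=> A0 A1 A01 binA; have [DA_gt0|DA_le0] := ltrP 0 (renyi_fin rho A0 A1).
  exact: ub_e.
have DA0 : renyi_fin rho A0 A1 = 0 by apply/eqP; rewrite eq_le DA_le0 renyi_fin_ge0.
by rewrite /sdpi_at DA0 mulr0 -DA0 renyi_fin_out_le.
Qed.

End Main.

Theorem theorem4p2 (R : realType) (X Y : finType) (W : X -> Y -> R)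
  (rho : \bar R) :
  is_channel W -> (1%:E <= rho)%E ->
  sdpi_eta rho W = sdpi_eta_binary rho W.
Proof.
move=> W_channel rho_ge1; apply/eqP; rewrite eq_le; apply/andP; split.
  apply: ge_ereal_sup => _ [P0 [P1 [adm ->]]].
  exact: sdpi_ratio_le_binary.
by apply: ereal_sup_le => _ [P0 [P1 [adm _ ->]]]; exists P0, P1.
Qed.
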